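(* Let $\mathcal Q_1,\dots,\mathcal Q_l\subseteq V$ be linear subspaces such that the linear spaces $\mathcal L_1,\dots,\mathcal L_l\subseteq\mathbb P(V^* )$ defined by $(\mathcal Q_1),\dots,(\mathcal Q_l)$ form a linearly joined sequence. Let $V'=\mathcal F_1\oplus\dots\oplus\mathcal F_l$ be a $K$-vector space, set $\tilde{\mathcal Q}_i=\mathcal Q_i\oplus\bigoplus_{j\neq i}\mathcal F_j\subseteq V\oplus V'$, and let $\tilde{\mathcal L}_i\subseteq\mathbb P((V\oplus V')^* )$ be the linear space defined by the ideal $(\tilde{\mathcal Q}_i)$ of $K[V\oplus V']$; identify $\mathcal L_i$ with the linear space defined by $(\mathcal Q_i)+(V')$ in $\mathbb P((V\oplus V')^* )$. Then: (1) the sequence $\tilde{\mathcal L}_1,\dots,\tilde{\mathcal L}_l$ is linearly joined, and for every $i=2,\dots,l$, $\tilde{\mathcal L}_i\cap(\tilde{\mathcal L}_1\cup\dots\cup\tilde{\mathcal L}_{i-1})=\mathcal L_i\cap(\mathcal L_1\cup\dots\cup\mathcal L_{i-1})$; (2) in $K[V\oplus V']$, $$\bigcap_{i=1}^l(\tilde{\mathcal Q}_i)=\Big(\bigcap_{i=1}^l(\mathcal Q_i)\Big)+\sum_{i=1}^l(\tilde{\mathcal Q}_i\times\mathcal F_i),$$ where $(\tilde{\mathcal Q}_i\times\mathcal F_i)$ is the ideal generated by all products $fg$ with $f\in\tilde{\mathcal Q}_i$, $g\in\mathcal F_i$.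
   Context: $K$ is a field, $V$ a finite-dimensional $K$-vector space, $S=K[V]$. For $Q$ a subset of a vector space $W$, $(Q)$ is the ideal of $K[W]$ generated by $Q$. A sequence $\mathcal L_1,\dots,\mathcal L_l$ of linear subspaces of a projective space is linearly joined if for every $i=1,\dots,l-1$, $\mathcal L_{i+1}\cap(\mathcal L_1\cup\dots\cup\mathcal L_i)=\mathcal L_{i+1}\cap\mathrm{span}(\mathcal L_1\cup\dots\cup\mathcal L_i)$, where $\mathrm{span}$ is the smallest linear subspace containing the set. *)

(* field K, V = K^n (row vectors), V' = K^m, K[W] = {mpoly K[dim W]}. *)
From HB Require Import structures.
From mathcomp Require Import all_boot all_order all_algebra.
From mathcomp Require Import mpoly.
Set Implicit Arguments. Unset Strict Implicit. Unset Printing Implicit Defensive.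
Import Order.TTheory GRing.Theory.
Local Open Scope ring_scope.

Section Defs.
Variable K : fieldType.

(* the vector v of W = K^N, seen as a linear form (degree-1 element) of K[W] *)
Definition linform (N : nat) (v : 'rV[K]_N) : {mpoly K[N]} :=
  \sum_(j < N) v 0 j *: 'X_j.

Definition ideal_gen (N : nat) (P : {mpoly K[N]} -> Prop) : {mpoly K[N]} -> Prop :=
  fun p => exists s : seq ({mpoly K[N]} * {mpoly K[N]}),
    (forall x, x \in s -> P x.2) /\ p = \sum_(x <- s) x.1 * x.2.

Definition lin_ideal (N : nat) (Q : 'rV[K]_N -> Prop) : {mpoly K[N]} -> Prop :=
  ideal_gen (fun p => exists v, Q v /\ p = linform v).

Definition ideal_add (N : nat) (I J : {mpoly K[N]} -> Prop) : {mpoly K[N]} -> Prop :=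
  fun p => exists a b, I a /\ J b /\ p = a + b.

Definition ideal_bigsum (N l : nat) (I : 'I_l -> {mpoly K[N]} -> Prop) :=
  ideal_gen (fun p => exists i, I i p).

Definition ideal_bigcap (N l : nat) (I : 'I_l -> {mpoly K[N]} -> Prop) :=
  fun p : {mpoly K[N]} => forall i, I i p.

Definition embl (n m : nat) (p : {mpoly K[n]}) : {mpoly K[n + m]} :=
  comp_mpoly [tuple ('X_(lshift m i) : {mpoly K[n + m]}) | i < n] p.

Definition ideal_ext (n m : nat) (I : {mpoly K[n]} -> Prop) : {mpoly K[n + m]} -> Prop :=
  ideal_gen (fun p => exists q, I q /\ p = embl m q).

(* A point of P(W^* ) is represented by any nonzero x in W^* = K^N (pairing
   <q, x> = sum_j q_j x_j, i.e. evaluation of linform q at x); a set of points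
   of P(W^* ) is represented by the (scaling-closed) set of its nonzero
   representatives. *)
Definition Zset (N : nat) (I : {mpoly K[N]} -> Prop) : 'rV[K]_N -> Prop :=
  fun x => x != 0 /\ forall p, I p -> p.@[fun j => x 0 j] = 0.

(* linear subspaces of P(W^* ): those defined by (Q), Q a linear subspace of W
   (given as the row space of a matrix) *)
Definition plinear (N : nat) (W : 'M[K]_N) : 'rV[K]_N -> Prop :=
  Zset (lin_ideal (fun v => (v <= W)%MS)).

Definition pspan (N : nat) (S : 'rV[K]_N -> Prop) : 'rV[K]_N -> Prop :=
  fun x => forall W : 'M[K]_N, (forall y, S y -> plinear W y) -> plinear W x.

(* union of L_1 .. L_i (0-based: indices j < i) *)
Definition prev_union (N l : nat) (L : 'I_l -> 'rV[K]_N -> Prop) (i : 'I_l) :=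
  fun x => exists j : 'I_l, (j < i)%N /\ L j x.

Definition linearly_joined (N l : nat) (L : 'I_l -> 'rV[K]_N -> Prop) :=
  forall i : 'I_l, (0 < i)%N -> forall x,
    (L i x /\ prev_union L i x) <-> (L i x /\ pspan (prev_union L i) x).

End Defs.

(** Write a point of P((V (+) V')^* ) as x = (y, z) with y in V^* and z in V'^*,
    and let Fcompl_i be the sum of the F_j, j <> i, so that V' = F_i (+) Fcompl_i.
    Then x lies on L~_i iff y lies on L_i and z annihilates Fcompl_i.  For i <> j
    the spaces Fcompl_i and Fcompl_j span V', so a common point of L~_i and L~_j
    has z = 0; and every point of the span of L~_1, ..., L~_(i-1) has z
    annihilating F_i, which together with x on L~_i again forces z = 0.  So the
    intersections with the earlier spaces are those of the L_j, and linear
    joinedness passes from the L_j to the L~_j.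

    For the ideals, let dropF set the V'-coordinates to 0 and projF_k project them
    onto F_k along Fcompl_k.  If p lies in every (Q~_i), then dropF p comes from
    the intersection of the (Q_i), each projF_k p - dropF p lies in (Q~_k x F_k),
    and p - dropF p differs from their sum by p - diagF p, where
    diagF = dropF + sum_k (projF_k - dropF).  The map diagF is linear and fixes
    linear forms, and diagF a * diagF b - diagF (a b) is a sum of products of an
    element of (F_j) with one of (F_k), j <> k; as F_j is contained in Q~_k, these
    lie in (Q~_k x F_k).  Induction on p then puts p - diagF p into the sum of the
    (Q~_k x F_k). *)

From HB Require Import structures.
From mathcomp Require Import all_boot all_order all_algebra.
From mathcomp Require Import mpoly ring.
Import GRing.Theory.
Local Open Scope ring_scope.
Set Implicit Arguments. Unset Strict Implicit. Unset Printing Implicit Defensive.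

Section IdealGen.
Variables (K : fieldType) (N : nat).
Implicit Types (P : {mpoly K[N]} -> Prop) (p q r : {mpoly K[N]}).

Lemma ideal_gen_mem P p : P p -> ideal_gen P p.
Proof.
move=> Pp; exists [:: (1, p)]; split; first by move=> x; rewrite inE => /eqP ->.
by rewrite big_seq1 mul1r.
Qed.

Lemma ideal_gen0 P : ideal_gen P 0.
Proof. by exists [::]; rewrite big_nil. Qed.

Lemma ideal_genD P p q : ideal_gen P p -> ideal_gen P q -> ideal_gen P (p + q).
Proof.
move=> [s [Ps ->]] [t [Pt ->]]; exists (s ++ t); split; last by rewrite big_cat.
by move=> x; rewrite mem_cat => /orP[/Ps | /Pt].
Qed.

Lemma ideal_genMl P r p : ideal_gen P p -> ideal_gen P (r * p).
Proof.
move=> [s [Ps ->]]; exists [seq (r * x.1, x.2) | x <- s]; split.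
  by move=> y /mapP[x xs ->] /=; exact: Ps.
by rewrite big_map big_distrr; apply: eq_bigr => x _ /=; rewrite mulrA.
Qed.

Lemma ideal_genMr P r p : ideal_gen P p -> ideal_gen P (p * r).
Proof. by rewrite mulrC; exact: ideal_genMl. Qed.

Lemma ideal_genZ P c p : ideal_gen P p -> ideal_gen P (c *: p).
Proof. by rewrite -mul_mpolyC; exact: ideal_genMl. Qed.

Lemma ideal_gen_sum P (I : Type) (s : seq I) (C : pred I) (G : I -> {mpoly K[N]}) :
  (forall i, C i -> ideal_gen P (G i)) -> ideal_gen P (\sum_(i <- s | C i) G i).
Proof. by move=> PG; apply: big_ind => //; [exact: ideal_gen0 | exact: ideal_genD]. Qed.

Lemma ideal_gen_subset P P' p :
  (forall q, P q -> ideal_gen P' q) -> ideal_gen P p -> ideal_gen P' p.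
Proof.
move=> PP' [s [Ps ->]]; rewrite big_seq; apply: ideal_gen_sum => x xs.
exact/ideal_genMl/PP'/Ps.
Qed.

Lemma ideal_gen_mul P P' P'' p q :
  (forall a b, P a -> P' b -> ideal_gen P'' (a * b)) ->
  ideal_gen P p -> ideal_gen P' q -> ideal_gen P'' (p * q).
Proof.
move=> PP' [s [Ps ->]] [t [Pt ->]].
rewrite big_distrl big_seq /=; apply: ideal_gen_sum => x xs; rewrite -mulrA; apply: ideal_genMl.
rewrite big_distrr big_seq /=; apply: ideal_gen_sum => y ys; rewrite mulrCA; apply: ideal_genMl.
exact: PP' (Ps x xs) (Pt y ys).
Qed.

Lemma ideal_gen_eval P (e : 'I_N -> K) p :
  (forall q, P q -> q.@[e] = 0) -> ideal_gen P p -> p.@[e] = 0.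
Proof.
move=> Pe [s [Ps ->]]; rewrite raddf_sum big_seq big1 // => x xs.
by rewrite /= mevalM (Pe x.2) ?mulr0 //; exact: Ps.
Qed.

End IdealGen.

Lemma ideal_gen_rmorph (K : fieldType) (N M : nat)
    (f : {rmorphism {mpoly K[N]} -> {mpoly K[M]}}) P P' p :
  (forall q, P q -> ideal_gen P' (f q)) -> ideal_gen P p -> ideal_gen P' (f p).
Proof.
move=> fP [s [Ps ->]]; rewrite rmorph_sum big_seq; apply: ideal_gen_sum => x xs.
by rewrite rmorphM; apply/ideal_genMl/fP/Ps.
Qed.

Lemma mpoly_alg_ind (R : nzRingType) (N : nat) (T : {mpoly R[N]} -> Prop) :
  T 1 -> (forall i, T 'X_i) -> (forall a b, T a -> T b -> T (a + b)) ->
  (forall c a, T a -> T (c *: a)) -> (forall a b, T a -> T b -> T (a * b)) ->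
  forall p, T p.
Proof.
move=> T1 TX TD TZ TM p.
have T0 : T 0 by rewrite -(scale0r 1); exact: TZ.
rewrite (mpolyE p); apply: big_ind => // mu _; apply: TZ.
rewrite mpolyXE_id; apply: big_ind => // i _.
by elim: (mu i) => [|k IHk]; rewrite ?expr0 // exprS; exact: TM.
Qed.

Lemma lrmorph_sub_ideal_gen (K : fieldType) (N M : nat)
    (f g : {lrmorphism {mpoly K[N]} -> {mpoly K[M]}}) P p :
  (forall i, ideal_gen P (f 'X_i - g 'X_i)) -> ideal_gen P (f p - g p).
Proof.
move=> fgX; elim/mpoly_alg_ind: p => [|//|a b fga fgb|c a fga|a b fga fgb].
- by rewrite !rmorph1 subrr; exact: ideal_gen0.
- by rewrite !rmorphD opprD addrACA; exact: ideal_genD.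
- by rewrite [f _]linearZ_LR [g _]linearZ_LR -scalerBr; exact: ideal_genZ.
have -> : f (a * b) - g (a * b) = (f a - g a) * f b + g a * (f b - g b).
  by rewrite !rmorphM mulrBl mulrBr addrA subrK.
by apply: ideal_genD; [exact: ideal_genMr | exact: ideal_genMl].
Qed.

Lemma sum_mul_offdiag (R : comPzRingType) (I : finType) (t u : R) (a b : I -> R) :
  (t + \sum_k a k) * (u + \sum_k b k) - (t * u + \sum_k ((t + a k) * (u + b k) - t * u))
  = \sum_j \sum_(k | k != j) a j * b k.
Proof.
have expand : \sum_k ((t + a k) * (u + b k) - t * u) =
    t * \sum_k b k + (\sum_k a k) * u + \sum_k a k * b k.
  by rewrite big_distrr big_distrl /= -!big_split /=; apply: eq_bigr => k _; ring.
have diag_offdiag : (\sum_k a k) * (\sum_k b k) =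
    \sum_k a k * b k + \sum_j \sum_(k | k != j) a j * b k.
  rewrite big_distrl -big_split; apply: eq_bigr => j _.
  by rewrite big_distrr (bigD1 j).
rewrite expand -[RHS](addKr (\sum_k a k * b k)) -diag_offdiag; ring.
Qed.

Section LinearForms.
Variables (K : fieldType) (N : nat).

Lemma linform_is_linear : linear (@linform K N).
Proof.
move=> c u v; rewrite /linform scaler_sumr -big_split; apply: eq_bigr => j _ /=.
by rewrite !mxE scalerDl scalerA.
Qed.

HB.instance Definition _ :=
  GRing.isLinear.Build K 'rV[K]_N {mpoly K[N]} *:%R (@linform K N) linform_is_linear.

Lemma linform_delta (i : 'I_N) : linform (delta_mx 0 i : 'rV[K]_N) = 'X_i.
Proof.
rewrite /linform (bigD1 i) //= big1 => [|j ji]; first by rewrite mxE !eqxx scale1r addr0.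
by rewrite mxE eqxx (negbTE ji) scale0r.
Qed.

Lemma meval_linform (v x : 'rV[K]_N) :
  (linform v).@[fun j => x 0 j] = (v *m x^T) 0 0.
Proof.
rewrite /linform raddf_sum mxE; apply: eq_bigr => j _.
by rewrite /= mevalZ mevalXU mxE.
Qed.

End LinearForms.

Definition lsubst (K : fieldType) (N N' : nat) (M : 'M[K]_(N, N')) :
  {mpoly K[N]} -> {mpoly K[N']} :=
  comp_mpoly [tuple linform (row i M) | i < N].

Section LinearSubstitution.
Variables (K : fieldType) (N N' : nat) (M : 'M[K]_(N, N')).

HB.instance Definition _ := GRing.LRMorphism.on (lsubst M).

Lemma lsubst_linform v : lsubst M (linform v) = linform (v *m M).
Proof.
rewrite {1}/linform raddf_sum [in RHS]mulmx_sum_row raddf_sum; apply: eq_bigr => j _.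
by rewrite /= linearZ_LR /= /lsubst comp_mpolyXU -tnth_nth tnth_mktuple linearZ.
Qed.

End LinearSubstitution.

Section Embedding.
Variables (K : fieldType) (n m : nat).

HB.instance Definition _ := GRing.LRMorphism.copy (@embl K n m)
  (comp_mpoly [tuple ('X_(lshift m i) : {mpoly K[n + m]}) | i < n]).

Lemma embl_linform (u : 'rV[K]_n) : embl m (linform u) = linform (row_mx u 0).
Proof.
rewrite {1}/linform raddf_sum /linform big_split_ord /=.
rewrite [X in _ = _ + X]big1 ?addr0 => [|j _]; last by rewrite row_mxEr mxE scale0r.
apply: eq_bigr => i _; rewrite /= linearZ_LR /= /embl comp_mpolyXU -tnth_nth tnth_mktuple.
by rewrite row_mxEl.
Qed.

End Embedding.

Section Annihilators.
Variable K : fieldType.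

Lemma sub_kermx_rowsP (r N c : nat) (A : 'M[K]_(r, N)) (B : 'M[K]_(N, c)) :
  reflect (forall v : 'rV_N, (v <= A)%MS -> v *m B = 0) (A <= kermx B)%MS.
Proof.
apply: (iffP idP) => [AB v vA | vB]; first exact/sub_kermxP/(submx_trans vA).
by apply/sub_kermxP/row_matrixP => i; rewrite row_mul row0; apply/vB/row_sub.
Qed.

Lemma sub1_kermx (N c : nat) (B : 'M[K]_(N, c)) : (1%:M <= kermx B)%MS = (B == 0).
Proof. by rewrite sub_kermx mul1mx. Qed.

Lemma submx_block_diag (n m : nat) (A : 'M[K]_n) (B : 'M[K]_m) (u : 'rV[K]_(n + m)) :
  (u <= block_mx A 0 0 B)%MS = (lsubmx u <= A)%MS && (rsubmx u <= B)%MS.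
Proof.
apply/idP/andP => [/submxP[w ->] | [/submxP[w1 uA] /submxP[w2 uB]]].
  by rewrite -(hsubmxK w) mul_row_block !mulmx0 addr0 add0r row_mxKl row_mxKr !submxMl.
apply/submxP; exists (row_mx w1 w2).
by rewrite mul_row_block !mulmx0 addr0 add0r -uA -uB hsubmxK.
Qed.

Lemma block_diag_sub_kermx (n m : nat) (A : 'M[K]_n) (B : 'M[K]_m) (x : 'rV[K]_(n + m)) :
  (block_mx A 0 0 B <= kermx x^T)%MS =
  (A <= kermx (lsubmx x)^T)%MS && (B <= kermx (rsubmx x)^T)%MS.
Proof.
by rewrite !sub_kermx -{1}(hsubmxK x) tr_row_mx mul_block_col !mul0mx addr0 add0r col_mx_eq0.
Qed.

End Annihilators.

Section ZeroSets.
Variable K : fieldType.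

Lemma Zset_lin_ideal (N : nat) (S : 'rV[K]_N -> Prop) x :
  Zset (lin_ideal S) x <-> x != 0 /\ forall v, S v -> v *m x^T = 0.
Proof.
split=> -[nz Zx].
  split=> // v Sv; have := Zx (linform v) (ideal_gen_mem (ex_intro _ v (conj Sv erefl))).
  by rewrite meval_linform => vx0; apply/matrixP => i j; rewrite !ord1 vx0 mxE.
split=> // p; apply: ideal_gen_eval => _ [v [Sv ->]].
by rewrite meval_linform Zx // mxE.
Qed.

Lemma plinear_kermx (N : nat) (W : 'M[K]_N) x :
  plinear W x <-> x != 0 /\ (W <= kermx x^T)%MS.
Proof.
rewrite /plinear Zset_lin_ideal.
by split=> -[nz Wx]; split=> //; apply/sub_kermx_rowsP.
Qed.

Lemma Zset_lin_ideal_block (n m : nat) (S : 'rV[K]_(n + m) -> Prop)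
    (A : 'M[K]_n) (B : 'M[K]_m) x :
  (forall v, S v <-> (lsubmx v <= A)%MS /\ (rsubmx v <= B)%MS) ->
  Zset (lin_ideal S) x <->
  x != 0 /\ (A <= kermx (lsubmx x)^T)%MS /\ (B <= kermx (rsubmx x)^T)%MS.
Proof.
move=> SAB; rewrite Zset_lin_ideal; split=> -[nz Zx]; split=> //.
  apply/andP; rewrite -block_diag_sub_kermx; apply/sub_kermx_rowsP => v.
  by rewrite submx_block_diag => /andP/SAB; exact: Zx.
have /sub_kermx_rowsP blockx : (block_mx A 0 0 B <= kermx x^T)%MS.
  by rewrite block_diag_sub_kermx; exact/andP.
by move=> v /SAB/andP; rewrite -submx_block_diag; exact: blockx.
Qed.

Lemma plinear_block (n m : nat) (A : 'M[K]_n) (B : 'M[K]_m) x :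
  plinear (block_mx A 0 0 B) x <->
  x != 0 /\ (A <= kermx (lsubmx x)^T)%MS /\ (B <= kermx (rsubmx x)^T)%MS.
Proof. by apply: Zset_lin_ideal_block => v; rewrite submx_block_diag; split => /andP. Qed.

Lemma Zset_ideal_add (N : nat) (I J : {mpoly K[N]} -> Prop) x :
  I 0 -> J 0 -> Zset (ideal_add I J) x <-> Zset I x /\ Zset J x.
Proof.
move=> I0 J0; split=> [[nz Zx] | [[nz ZIx] [_ ZJx]]].
  by split; split=> // p ?; apply: Zx; [exists p, 0 | exists 0, p]; rewrite ?addr0 ?add0r.
by split=> // _ [a [b [Ia [Jb ->]]]]; rewrite mevalD ZIx // ZJx // addr0.
Qed.

Lemma sub_pspan (N : nat) (S : 'rV[K]_N -> Prop) x : S x -> pspan S x.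
Proof. by move=> Sx W; apply. Qed.

End ZeroSets.

Section LinearlyJoinedExtension.
Variables (K : fieldType) (n m l : nat) (Q : 'I_l -> 'M[K]_n) (F : 'I_l -> 'M[K]_m).
Hypothesis F_direct : mxdirect (\sum_i F i).
Hypothesis F_full : (1%:M <= \sum_i F i)%MS.

Definition Fcompl i := (\sum_(j | j != i) F j)%MS.

Definition Qtilde i (v : 'rV[K]_(n + m)) :=
  (lsubmx v <= Q i)%MS /\ (rsubmx v <= Fcompl i)%MS.

Definition Ltilde i := Zset (lin_ideal (Qtilde i)).

Definition Lext i := Zset (ideal_add
  (lin_ideal (fun v : 'rV[K]_(n + m) => (lsubmx v <= Q i)%MS /\ rsubmx v = 0))
  (lin_ideal (fun v : 'rV[K]_(n + m) => lsubmx v = 0))).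

Lemma F_sub_Fcompl i j : i != j -> (F i <= Fcompl j)%MS.
Proof. by move=> ij; apply: (sumsmx_sup i). Qed.

Lemma Fcompl_ann_eq0 i (z : 'rV[K]_m) :
  (Fcompl i <= kermx z^T)%MS -> (F i <= kermx z^T)%MS -> z = 0.
Proof.
move=> Gz Fz; apply/eqP; rewrite -trmx_eq0 -sub1_kermx (submx_trans F_full) //.
apply/sumsmx_subP => j _; have [-> // | ji] := eqVneq j i.
exact: submx_trans (F_sub_Fcompl ji) Gz.
Qed.

Lemma Ltilde_kermx i x : Ltilde i x <->
  x != 0 /\ (Q i <= kermx (lsubmx x)^T)%MS /\ (Fcompl i <= kermx (rsubmx x)^T)%MS.
Proof. exact: Zset_lin_ideal_block. Qed.

Lemma Lext_Ltilde i x : Lext i x <-> Ltilde i x /\ rsubmx x = 0.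
Proof.
rewrite /Lext Zset_ideal_add; try exact: ideal_gen0.
rewrite (@Zset_lin_ideal_block _ _ _ _ (Q i) 0); last first.
  by move=> v; rewrite submx0; split=> -[? /eqP].
rewrite (@Zset_lin_ideal_block _ _ _ _ 0 1%:M); last first.
  by move=> v; rewrite submx0 submx1; split=> [-> | [/eqP]].
rewrite Ltilde_kermx !sub0mx sub1_kermx trmx_eq0.
split=> [[[nz [Qx _]] [_ [_ /eqP z0]]] | [[nz [Qx _]] z0]].
  by rewrite z0 trmx0 kermx0 submx1.
by rewrite z0 eqxx.
Qed.

Lemma Ltilde_prev_meet i x :
  (Ltilde i x /\ prev_union Ltilde i x) <-> (Lext i x /\ prev_union Lext i x).
Proof.
split=> [[Lix [j [ji Ljx]]] | [/Lext_Ltilde[Lix _] [j [ji /Lext_Ltilde[Ljx _]]]]].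
  have [_ [_ Gi]] := (Ltilde_kermx i x).1 Lix; have [_ [_ Gj]] := (Ltilde_kermx j x).1 Ljx.
  have ij : i != j by rewrite neq_ltn ji orbT.
  have z0 : rsubmx x = 0 := Fcompl_ann_eq0 Gi (submx_trans (F_sub_Fcompl ij) Gj).
  by split; [apply/Lext_Ltilde | exists j; split=> //; apply/Lext_Ltilde].
by split=> //; exists j.
Qed.

Lemma pspan_prev_Ltilde_ann i x :
  pspan (prev_union Ltilde i) x -> (F i <= kermx (rsubmx x)^T)%MS.
Proof.
move=> span_x; suff /plinear_block[_ [_ //]] : plinear (block_mx 0 0 0 (F i)) x.
apply: span_x => y [j [ji /Ltilde_kermx[nz [_ Gy]]]]; apply/plinear_block.
have ij : i != j by rewrite neq_ltn ji orbT.
by rewrite sub0mx (submx_trans (F_sub_Fcompl ij) Gy).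
Qed.

Lemma pspan_prev_Ltilde_lsub i x : lsubmx x != 0 ->
  pspan (prev_union Ltilde i) x -> pspan (prev_union (fun j => plinear (Q j)) i) (lsubmx x).
Proof.
move=> nz span_x W spanW; apply/plinear_kermx; split=> //.
suff /plinear_block[_ [+ _]] : plinear (block_mx W 0 0 0) x by [].
apply: span_x => y [j [ji /Ltilde_kermx[nzy [Qy _]]]]; apply/plinear_block.
rewrite sub0mx; split=> //; split=> //.
have [-> | nzly] := eqVneq (lsubmx y) 0; first by rewrite trmx0 kermx0 submx1.
have Ljy : plinear (Q j) (lsubmx y) by apply/plinear_kermx.
by have /plinear_kermx[] := spanW _ (ex_intro _ j (conj ji Ljy)).
Qed.

Lemma Ltilde_linearly_joined :
  linearly_joined (fun i => plinear (Q i)) -> linearly_joined Ltilde.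
Proof.
move=> LJ i i_gt0 x; split=> [[Lix [j [ji Ljx]]] | [Lix span_x]].
  by split=> //; apply: sub_pspan; exists j.
split=> //; have [nz [Qx Gx]] := (Ltilde_kermx i x).1 Lix.
have z0 : rsubmx x = 0 := Fcompl_ann_eq0 Gx (pspan_prev_Ltilde_ann span_x).
have nzy : lsubmx x != 0.
  by apply: contraNneq nz => y0; rewrite -(hsubmxK x) y0 z0 row_mx0.
have Lix' : plinear (Q i) (lsubmx x) by apply/plinear_kermx.
have [_ [j [ji /plinear_kermx[_ Qjx]]]] :=
  (LJ i i_gt0 (lsubmx x)).2 (conj Lix' (pspan_prev_Ltilde_lsub nzy span_x)).
by exists j; split=> //; apply/Ltilde_kermx; rewrite z0 trmx0 kermx0 submx1.
Qed.

Definition proj i := proj_mx (F i) (Fcompl i).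

Lemma F_cap_Fcompl i : (F i :&: Fcompl i = 0)%MS.
Proof. by move/mxdirect_sumsP: F_direct; apply. Qed.

Lemma proj_id i (g : 'rV[K]_m) : (g <= F i)%MS -> g *m proj i = g.
Proof. exact/proj_mx_id/F_cap_Fcompl. Qed.

Lemma proj_Fcompl i (g : 'rV[K]_m) : (g <= Fcompl i)%MS -> g *m proj i = 0.
Proof. exact/proj_mx_0/F_cap_Fcompl. Qed.

Lemma sum_proj (g : 'rV[K]_m) : \sum_i g *m proj i = g.
Proof.
have /sub_sumsmxP[u gE] : (g <= \sum_i F i)%MS by exact: submx_trans (submx1 g) F_full.
rewrite [in LHS]gE; under eq_bigr => i _ do rewrite mulmx_suml.
rewrite exchange_big [in RHS]gE; apply: eq_bigr => j _ /=.
rewrite (bigD1 j) //= proj_id ?submxMl // big1 ?addr0 // => i ij.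
by apply/proj_Fcompl/(submx_trans (submxMl _ _))/F_sub_Fcompl; rewrite eq_sym.
Qed.

Definition restrV : {mpoly K[n + m]} -> {mpoly K[n]} :=
  lsubst (col_mx 1%:M 0 : 'M[K]_(n + m, n)).

Definition dropF : {mpoly K[n + m]} -> {mpoly K[n + m]} := embl m \o restrV.

HB.instance Definition _ := GRing.LRMorphism.copy dropF (embl m \o restrV).

Section Projection.
Variable k : 'I_l.

Definition projF : {mpoly K[n + m]} -> {mpoly K[n + m]} :=
  lsubst (block_mx 1%:M 0 0 (proj k) : 'M[K]_(n + m)).

HB.instance Definition _ := GRing.LRMorphism.on projF.

End Projection.

Lemma restrV_linform v : restrV (linform v) = linform (lsubmx v).
Proof. by rewrite /restrV lsubst_linform -{1}(hsubmxK v) mul_row_col mulmx1 mulmx0 addr0. Qed.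

Lemma dropF_linform v : dropF (linform v) = linform (row_mx (lsubmx v) 0).
Proof. by rewrite /dropF /= restrV_linform embl_linform. Qed.

Lemma projF_linform k v :
  projF k (linform v) = linform (row_mx (lsubmx v) (rsubmx v *m proj k)).
Proof.
by rewrite /projF lsubst_linform -{1}(hsubmxK v) mul_row_block !mulmx0 mulmx1 addr0 add0r.
Qed.

Lemma projF_sub_dropF_linform k v :
  projF k (linform v) - dropF (linform v) = linform (row_mx 0 (rsubmx v *m proj k)).
Proof.
by rewrite projF_linform dropF_linform -raddfB opp_row_mx add_row_mx subrr oppr0 addr0.
Qed.

Definition Fideal k :=
  lin_ideal (fun v : 'rV[K]_(n + m) => lsubmx v = 0 /\ (rsubmx v <= F k)%MS).

Definition QF_gens k (q : {mpoly K[n + m]}) := exists f g,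
  Qtilde k f /\ (g <= F k)%MS /\ q = linform f * linform (row_mx 0 g).

Definition QFsum : {mpoly K[n + m]} -> Prop := ideal_bigsum (fun k => ideal_gen (QF_gens k)).

Lemma projF_sub_dropF_Fideal k p : Fideal k (projF k p - dropF p).
Proof.
apply: lrmorph_sub_ideal_gen => i; rewrite -linform_delta projF_sub_dropF_linform.
apply: ideal_gen_mem; eexists; split; last reflexivity.
by rewrite row_mxKl row_mxKr proj_mx_sub.
Qed.

Lemma projF_sub_dropF_QF k p :
  lin_ideal (Qtilde k) p -> ideal_gen (QF_gens k) (projF k p - dropF p).
Proof.
move=> [s [Qs ->]]; rewrite !rmorph_sum -sumrB big_seq; apply: ideal_gen_sum => x xs.
have [v [[Qv Gv] ->]] := Qs x xs.
rewrite !rmorphM /= projF_linform dropF_linform (proj_Fcompl Gv) -mulrBl.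
set w := row_mx (lsubmx v) 0.
apply: (ideal_gen_mul (P' := eq (linform w))) (projF_sub_dropF_Fideal k x.1) _; last first.
  exact: ideal_gen_mem.
move=> _ _ [u [[u_l u_r] ->]] <-; apply: ideal_gen_mem.
exists w, (rsubmx u); split; first by rewrite /Qtilde row_mxKl row_mxKr sub0mx.
by split=> //; rewrite mulrC -{1}(hsubmxK u) u_l.
Qed.

Lemma Fideal_mul_QFsum j k a b : j != k -> Fideal j a -> Fideal k b -> QFsum (a * b).
Proof.
move=> jk Fa Fb; apply: ideal_gen_mem; exists k; move: Fa Fb; apply: ideal_gen_mul.
move=> _ _ [u [[u_l u_r] ->]] [w [[w_l w_r] ->]]; apply: ideal_gen_mem.
exists u, (rsubmx w); split.
  by rewrite /Qtilde u_l sub0mx (submx_trans u_r (F_sub_Fcompl jk)).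
by split=> //; rewrite -{1}(hsubmxK w) w_l.
Qed.

Definition diagF (p : {mpoly K[n + m]}) := dropF p + \sum_k (projF k p - dropF p).

Lemma diagFD a b : diagF (a + b) = diagF a + diagF b.
Proof.
rewrite /diagF [dropF _]rmorphD addrACA -big_split /=; congr (_ + _).
by apply: eq_bigr => k _; rewrite [projF k _]rmorphD opprD addrACA.
Qed.

Lemma diagFZ c a : diagF (c *: a) = c *: diagF a.
Proof.
rewrite /diagF scalerDr [c *: \sum_k _]scaler_sumr [dropF _]linearZ_LR; congr (_ + _).
by apply: eq_bigr => k _; rewrite [projF k _]linearZ_LR scalerBr.
Qed.

Lemma diagF_linform v : diagF (linform v) = linform v.
Proof.
rewrite /diagF; under eq_bigr => k _ do rewrite projF_sub_dropF_linform.
have row_mx0D (a b : 'rV[K]_m) : row_mx (0 : 'rV[K]_n) (a + b) = row_mx 0 a + row_mx 0 b.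
  by rewrite add_row_mx addr0.
rewrite dropF_linform -raddf_sum -raddfD -(big_morph _ row_mx0D (row_mx0 _ _ _ _)).
by rewrite add_row_mx addr0 add0r sum_proj hsubmxK.
Qed.

Lemma diagF_mul_offdiag a b : diagF a * diagF b - diagF (a * b) =
  \sum_j \sum_(k | k != j) (projF j a - dropF a) * (projF k b - dropF b).
Proof.
rewrite -(sum_mul_offdiag (dropF a) (dropF b)) /diagF rmorphM; congr (_ - (_ + _)).
by apply: eq_bigr => k _; rewrite !rmorphM ![dropF _ + _]addrC !subrK.
Qed.

Lemma sub_diagF_QFsum p : QFsum (p - diagF p).
Proof.
elim/mpoly_alg_ind: p => [|i|a b Ja Jb|c a Ja|a b Ja Jb].
- rewrite /diagF rmorph1 big1 ?addr0 ?subrr => [|k _]; first exact: ideal_gen0.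
  by rewrite rmorph1 subrr.
- by rewrite -linform_delta diagF_linform subrr; exact: ideal_gen0.
(* The values of diagF are generalized before rewriting: otherwise matching
   ring lemmas against them unfolds diagF and takes forever. *)
- rewrite diagFD; move: (diagF a) (diagF b) Ja Jb => u v Ju Jv.
  by rewrite opprD addrACA; exact: ideal_genD.
- rewrite diagFZ; move: (diagF a) Ja => u Ju.
  by rewrite -scalerBr; exact: ideal_genZ.
move: (diagF_mul_offdiag a b) Ja Jb.
move: (diagF a) (diagF b) (diagF (a * b)) => u v w uvw Ju Jv.
have -> : a * b - w = (a - u) * b + u * (b - v) + (u * v - w).
  by rewrite mulrBl mulrBr !addrA !subrK.
rewrite uvw; apply: ideal_genD.
  by apply: ideal_genD; [exact: ideal_genMr | exact: ideal_genMl].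
apply: ideal_gen_sum => j _; apply: ideal_gen_sum => k kj.
apply: Fideal_mul_QFsum (projF_sub_dropF_Fideal j a) (projF_sub_dropF_Fideal k b).
by rewrite eq_sym.
Qed.

Lemma dropF_ideal_ext p : (forall i, lin_ideal (Qtilde i) p) ->
  ideal_ext (ideal_bigcap (fun i => lin_ideal (fun v : 'rV[K]_n => (v <= Q i)%MS))) (dropF p).
Proof.
move=> Qp; apply: ideal_gen_mem; exists (restrV p); split=> // i.
apply: ideal_gen_rmorph (Qp i) => _ [v [[Qv _] ->]]; rewrite /= -/restrV restrV_linform.
by apply: ideal_gen_mem; exists (lsubmx v).
Qed.

Lemma sub_dropF_QFsum p : (forall i, lin_ideal (Qtilde i) p) -> QFsum (p - dropF p).
Proof.
move=> Qp; have -> : p - dropF p = (p - diagF p) + \sum_k (projF k p - dropF p).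
  by rewrite /diagF opprD addrA subrK.
apply: ideal_genD; first exact: sub_diagF_QFsum.
by apply: ideal_gen_sum => k _; apply: ideal_gen_mem; exists k; exact: projF_sub_dropF_QF.
Qed.

Lemma ideal_ext_sub_Qtilde i p :
  ideal_ext (ideal_bigcap (fun i => lin_ideal (fun v : 'rV[K]_n => (v <= Q i)%MS))) p ->
  lin_ideal (Qtilde i) p.
Proof.
apply: ideal_gen_subset => _ [q [Qq ->]]; apply: ideal_gen_rmorph (Qq i) => _ [u [Qu ->]].
rewrite /= embl_linform; apply: ideal_gen_mem; exists (row_mx u 0); split=> //.
by rewrite /Qtilde row_mxKl row_mxKr sub0mx.
Qed.

Lemma QFsum_sub_Qtilde i p : QFsum p -> lin_ideal (Qtilde i) p.
Proof.
apply: ideal_gen_subset => q [k]; apply: ideal_gen_subset => _ [f [g [Qf [Fg ->]]]].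
have [<- | ki] := eqVneq k i; first by apply/ideal_genMr/ideal_gen_mem; exists f.
apply/ideal_genMl/ideal_gen_mem; exists (row_mx 0 g); split=> //.
by rewrite /Qtilde row_mxKl row_mxKr sub0mx (submx_trans Fg (F_sub_Fcompl ki)).
Qed.

End LinearlyJoinedExtension.

Unset Implicit Arguments. Set Strict Implicit.

Theorem mainTheorem6 (K : fieldType) (n m l : nat)
  (Q : 'I_l -> 'M[K]_n) (F : 'I_l -> 'M[K]_m) :
  (* V' = F_1 (+) ... (+) F_l *)
  mxdirect (\sum_i F i) -> (\sum_i F i == 1%:M)%MS ->
  (* L_i defined by (Q_i) in P(V^* ) form a linearly joined sequence *)
  linearly_joined (fun i => Zset (lin_ideal (fun v : 'rV[K]_n => (v <= Q i)%MS))) ->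
  let Qt := fun (i : 'I_l) (v : 'rV[K]_(n + m)) =>
    (lsubmx v <= Q i)%MS /\ (rsubmx v <= \sum_(j | j != i) F j)%MS in
  let Lt := fun i => Zset (lin_ideal (Qt i)) in
  (* L_i identified with the linear space defined by (Q_i) + (V') *)
  let L' := fun i => Zset (ideal_add
      (lin_ideal (fun v : 'rV[K]_(n + m) => (lsubmx v <= Q i)%MS /\ rsubmx v = 0))
      (lin_ideal (fun v : 'rV[K]_(n + m) => lsubmx v = 0))) in
  (linearly_joined Lt /\
   forall i : 'I_l, (0 < i)%N -> forall x,
     (Lt i x /\ prev_union Lt i x) <-> (L' i x /\ prev_union L' i x)) /\
  (forall p : {mpoly K[n + m]},
     ideal_bigcap (fun i => lin_ideal (Qt i)) p <->
     ideal_add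
       (@ideal_ext K n m (ideal_bigcap (fun i => lin_ideal (fun v : 'rV[K]_n => (v <= Q i)%MS))))
       (ideal_bigsum (fun i => ideal_gen (fun q => exists f g,
          Qt i f /\ (g <= F i)%MS /\ q = linform f * linform (row_mx 0 g)))) p).
Proof.
move=> F_direct /andP[_ F_full] LJ Qt Lt L'.
split; first split.
- exact: Ltilde_linearly_joined.
- by move=> i _ x; exact: Ltilde_prev_meet.
move=> p; split=> [Qp | [a [b [ext_a [QF_b ->]]]] i].
- exists (dropF p), (p - dropF p); split; first exact: (dropF_ideal_ext (F := F) Qp).
  by split; [exact: (sub_dropF_QFsum F_direct F_full Qp) | rewrite subrKC].
- by apply: ideal_genD; [exact: ideal_ext_sub_Qtilde | exact: QFsum_sub_Qtilde].
Qed.
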